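(* Let $G$ and $H$ be fermionic groups. Suppose $(-1)^F_H\neq 1$ in $H$, and let $H_b:=H/\langle(-1)^F_H\rangle$. Then \[ 1\to G\xrightarrow{i} G\otimes H\xrightarrow{\pi} H_b\to 1,\qquad i(g)=g\otimes 1,\quad \pi(g\otimes h)=[h], \] is an exact sequence of topological groups. If additionally the grading homomorphism $\theta_G$ of $G$ is nontrivial, then restricting to even parts gives an exact sequence \[ 1\to G_{ev}\xrightarrow{i}(G\otimes H)_{ev}\xrightarrow{\pi} H_b\to 1 . \] Here $G_{ev}=\ker\theta_G$, and $(G\otimes H)_{ev}$ is the kernel of the grading of $G\otimes H$.
   Context: A fermionic group is a topological group $G$ together with a central element $(-1)^F$ with $((-1)^F)^2=1$ and a continuous homomorphism $\theta:G\to\mathbb{Z}_2$ with $\theta((-1)^F)=0$. The fermionic tensor product $G\otimes H$ is the quotient space $(G\times H)/\langle((-1)^F_G,(-1)^F_H)\rangle$, with elements written $g\otimes h$. Its product is $(g_1\otimes h_1)(g_2\otimes h_2)=((-1)^F_G)^{\theta(g_2)\theta(h_1)}g_1g_2\otimes h_1h_2$. Its fermion parity is $(-1)^F_G\otimes 1$, and its grading is $\theta(g\otimes h)=\theta_G(g)+\theta_H(h)$. *)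

From HB Require Import structures.
From mathcomp Require Import all_boot all_order all_algebra generic_quotient.
From mathcomp Require Import all_classical.
From mathcomp Require Import topology_structure product_topology bool_topology quotient_topology subspace_topology.

Set Implicit Arguments.
Unset Strict Implicit.
Unset Printing Implicit Defensive.

Local Open Scope classical_set_scope.
Local Open Scope quotient_scope.

(* A fermionic group: a topological group G (explicit operations and axioms),
   a central element F = (-1)^F with F^2 = 1, and a continuous homomorphism
   theta : G -> Z_2 (Z_2 = bool with xor, discrete topology), theta F = 0. *)
Record fermionicGroup := FermionicGroup {
  fg_car :> topologicalType;
  fg_mul : fg_car -> fg_car -> fg_car;
  fg_one : fg_car;
  fg_inv : fg_car -> fg_car;
  fg_mulA : associative fg_mul;
  fg_mul1l : left_id fg_one fg_mul;
  fg_mul1r : right_id fg_one fg_mul;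
  fg_mulVl : left_inverse fg_one fg_inv fg_mul;
  fg_mulVr : right_inverse fg_one fg_inv fg_mul;
  fg_mul_cont : continuous (fun p : fg_car * fg_car => fg_mul p.1 p.2);
  fg_inv_cont : continuous fg_inv;
  fg_F : fg_car;
  fg_F_central : forall x, fg_mul fg_F x = fg_mul x fg_F;
  fg_F2 : fg_mul fg_F fg_F = fg_one;
  fg_theta : fg_car -> bool;
  fg_theta_mul : forall x y, fg_theta (fg_mul x y) = fg_theta x (+) fg_theta y;
  fg_theta_cont : continuous fg_theta;
  fg_theta_F : fg_theta fg_F = false
}.

Section Quotients.
Variables G H : fermionicGroup.

Lemma fg_FFx (K : fermionicGroup) (x : K) : fg_mul (fg_F K) (fg_mul (fg_F K) x) = x.
Proof. by rewrite fg_mulA fg_F2 fg_mul1l. Qed.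

Definition tens_r (p q : G * H) : bool :=
  (p == q) || (p == (fg_mul (fg_F G) q.1, fg_mul (fg_F H) q.2)).

Lemma tens_r_refl : reflexive tens_r.
Proof. by move=> p; rewrite /tens_r eqxx. Qed.

Lemma tens_r_sym : symmetric tens_r.
Proof.
move=> [a b] [c d]; rewrite /tens_r /=; apply/orP/orP => -[/eqP E|/eqP E].
- by left; rewrite E.
- by right; case: E => -> ->; rewrite !fg_FFx.
- by left; rewrite E.
- by right; case: E => -> ->; rewrite !fg_FFx.
Qed.

Lemma tens_r_trans : transitive tens_r.
Proof.
move=> [a b] [c d] [e f]; rewrite /tens_r /=.
case/orP=> /eqP[-> ->]; case/orP=> /eqP[-> ->];
  by rewrite ?fg_FFx eqxx ?orbT.
Qed.

Canonical tens_equiv := EquivRel tens_r tens_r_refl tens_r_sym tens_r_trans.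

Definition bos_r (p q : H) : bool := (p == q) || (p == fg_mul (fg_F H) q).

Lemma bos_r_refl : reflexive bos_r.
Proof. by move=> p; rewrite /bos_r eqxx. Qed.

Lemma bos_r_sym : symmetric bos_r.
Proof.
move=> a c; rewrite /bos_r; apply/orP/orP => -[/eqP E|/eqP E].
- by left; rewrite E.
- by right; rewrite E fg_FFx.
- by left; rewrite E.
- by right; rewrite E fg_FFx.
Qed.

Lemma bos_r_trans : transitive bos_r.
Proof.
move=> c a e; rewrite /bos_r.
case/orP=> /eqP->; case/orP=> /eqP->; by rewrite ?fg_FFx eqxx ?orbT.
Qed.

Canonical bos_equiv := EquivRel bos_r bos_r_refl bos_r_sym bos_r_trans.

End Quotients.

(* G (x) H = (G x H)/<((-1)^F_G, (-1)^F_H)>, with the quotient topology *)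
Definition tens (G H : fermionicGroup) : topologicalType :=
  quotient_topology {eq_quot tens_equiv G H}.

Definition bos (H : fermionicGroup) : topologicalType :=
  quotient_topology {eq_quot bos_equiv H}.

Section Ops.
Variables G H : fermionicGroup.

Definition Fpow (K : fermionicGroup) (b : bool) : K := if b then fg_F K else fg_one K.

Definition tens_mul (x y : tens G H) : tens G H :=
  let: (g1, h1) := repr x in let: (g2, h2) := repr y in
  \pi_(tens G H) (fg_mul (@Fpow G (@fg_theta G g2 && @fg_theta H h1)) (fg_mul g1 g2),
                  fg_mul h1 h2).

Definition tens_one : tens G H := \pi_(tens G H) (fg_one G, fg_one H).

Definition tens_theta (x : tens G H) : bool :=
  @fg_theta G (repr x).1 (+) @fg_theta H (repr x).2.

Definition tens_incl (g : G) : tens G H := \pi_(tens G H) (g, fg_one H).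

Definition tens_proj (x : tens G H) : bos H := \pi_(bos H) (repr x).2.

End Ops.

Definition bos_mul (H : fermionicGroup) (x y : bos H) : bos H :=
  \pi_(bos H) (fg_mul (repr x) (repr y)).
Definition bos_one (H : fermionicGroup) : bos H := \pi_(bos H) (fg_one H).

Definition fg_even (G : fermionicGroup) : set G := [set g | @fg_theta G g = false].
Definition tens_even (G H : fermionicGroup) : set (tens G H) :=
  [set z | tens_theta z = false].

(* A short exact sequence 1 -> A -> B -> C -> 1 of topological groups, where
   A and B are given as subgroups SA, SB (with the subspace topology) of
   ambient topological groups; C is the whole ambient group.
   i and p are continuous homomorphisms, i is injective, im i = ker p,
   p is surjective. *)
Definition exact_seq_on {A B C : topologicalType}
  (mA : A -> A -> A) (mB : B -> B -> B) (mC : C -> C -> C) (oneC : C)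
  (SA : set A) (SB : set B) (i : A -> B) (p : B -> C) : Prop :=
  i @` SA `<=` SB
  /\ {within SA, continuous i}
  /\ {within SB, continuous p}
  /\ (forall x y, SA x -> SA y -> i (mA x y) = mB (i x) (i y))
  /\ (forall x y, SB x -> SB y -> p (mB x y) = mC (p x) (p y))
  /\ (forall x y, SA x -> SA y -> i x = i y -> x = y)
  /\ (forall b, SB b -> (p b = oneC <-> exists2 a, SA a & i a = b))
    /\ (forall c, exists2 b, SB b & p b = c).

From HB Require Import structures.
From mathcomp Require Import all_boot all_order all_algebra generic_quotient.
From mathcomp Require Import all_classical.
From mathcomp Require Import topology_structure product_topology bool_topology quotient_topology subspace_topology.

(* Changing the representative of a class [(g, h)] of G (x) H multiplies both
   entries by (-1)^F, which is central and even, so the product, the grading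
   and pi[(g, h)] = [h] can be computed on any representative. Then [(g, h)]
   lies in ker pi iff h = 1 or h = (-1)^F, and in the second case
   [(g, h)] = [((-1)^F g, 1)]; so ker pi = im i. The map i is injective because
   [(x, 1)] = [(y, 1)] with x <> y would force (-1)^F_H = 1. Finally [(g, h)]
   maps to [h] for every g, and g can be chosen with theta g = theta h, making
   [(g, h)] even, as soon as theta_G is onto. *)

Local Open Scope classical_set_scope.
Local Open Scope quotient_scope.

Section FermionicGroupTheory.
Variable K : fermionicGroup.

Lemma fg_theta1 : fg_theta (fg_one K) = false.
Proof. by have := fg_theta_mul (fg_one K) (fg_one K); rewrite fg_mul1l; case: fg_theta. Qed.

Lemma fg_thetaF (x : K) : fg_theta (fg_mul (fg_F K) x) = fg_theta x.
Proof. by rewrite fg_theta_mul fg_theta_F. Qed.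

Lemma fg_mulCA_F (x y : K) : fg_mul x (fg_mul (fg_F K) y) = fg_mul (fg_F K) (fg_mul x y).
Proof. by rewrite fg_mulA -fg_F_central -fg_mulA. Qed.

Lemma fg_theta_onto : (exists g : K, fg_theta g = true) -> forall b, exists g : K, fg_theta g = b.
Proof. by move=> [g theta_g] [|]; [exists g | exists (fg_one K); rewrite fg_theta1]. Qed.

End FermionicGroupTheory.

Section BosonicQuotient.
Variable H : fermionicGroup.

Lemma bos_eqP (h k : H) : \pi_(bos H) h = \pi_(bos H) k <-> bos_r h k.
Proof. by split=> [/eqmodP | hk]; last apply/eqmodP. Qed.

Lemma bos_piF (h : H) : \pi_(bos H) (fg_mul (fg_F H) h) = \pi_(bos H) h.
Proof. by apply/bos_eqP; rewrite /bos_r eqxx orbT. Qed.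

Lemma bos_repr_pi (h : H) :
  repr (\pi_(bos H) h) = h \/ repr (\pi_(bos H) h) = fg_mul (fg_F H) h.
Proof.
have : bos_r (repr (\pi_(bos H) h)) h by apply/bos_eqP; rewrite reprK.
by case/orP=> /eqP E; [left | right].
Qed.

Lemma bos_mul_pi (h k : H) :
  bos_mul (\pi_(bos H) h) (\pi_(bos H) k) = \pi_(bos H) (fg_mul h k).
Proof.
rewrite /bos_mul; case: (bos_repr_pi h) => ->; case: (bos_repr_pi k) => ->;
  by rewrite -?fg_mulA ?fg_mulCA_F ?fg_FFx ?bos_piF.
Qed.

End BosonicQuotient.

Section TensorProduct.
Variables G H : fermionicGroup.

Definition pairF (p : G * H) : G * H := (fg_mul (fg_F G) p.1, fg_mul (fg_F H) p.2).

Definition tens_mul_pair (p q : G * H) : G * H :=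
  (fg_mul (Fpow G (fg_theta q.1 && fg_theta p.2)) (fg_mul p.1 q.1), fg_mul p.2 q.2).

Lemma tens_eqP (p q : G * H) : \pi_(tens G H) p = \pi_(tens G H) q <-> tens_r p q.
Proof. by split=> [/eqmodP | pq]; last apply/eqmodP. Qed.

Lemma tens_piF (p : G * H) : \pi_(tens G H) (pairF p) = \pi_(tens G H) p.
Proof. by apply/tens_eqP; rewrite /tens_r eqxx orbT. Qed.

Lemma tens_repr_pi (p : G * H) :
  repr (\pi_(tens G H) p) = p \/ repr (\pi_(tens G H) p) = pairF p.
Proof.
have : tens_r (repr (\pi_(tens G H) p)) p by apply/tens_eqP; rewrite reprK.
by case/orP=> /eqP E; [left | right].
Qed.

Lemma tens_mul_pairFl (p q : G * H) :
  tens_mul_pair (pairF p) q = pairF (tens_mul_pair p q).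
Proof. by rewrite /tens_mul_pair /pairF /= fg_thetaF -!fg_mulA !fg_mulCA_F. Qed.

Lemma tens_mul_pairFr (p q : G * H) :
  tens_mul_pair p (pairF q) = pairF (tens_mul_pair p q).
Proof. by rewrite /tens_mul_pair /pairF /= fg_thetaF !fg_mulCA_F. Qed.

Lemma tens_mulE (x y : tens G H) :
  tens_mul x y = \pi_(tens G H) (tens_mul_pair (repr x) (repr y)).
Proof. by rewrite /tens_mul; case: (repr x) => g1 h1; case: (repr y). Qed.

Lemma tens_mul_pi (p q : G * H) :
  tens_mul (\pi_(tens G H) p) (\pi_(tens G H) q) = \pi_(tens G H) (tens_mul_pair p q).
Proof.
rewrite tens_mulE; case: (tens_repr_pi p) => ->; case: (tens_repr_pi q) => ->;
  by rewrite ?tens_mul_pairFl ?tens_mul_pairFr ?tens_piF.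
Qed.

Lemma tens_theta_pi (p : G * H) :
  tens_theta (\pi_(tens G H) p) = fg_theta p.1 (+) fg_theta p.2.
Proof. by rewrite /tens_theta; case: (tens_repr_pi p) => -> //=; rewrite !fg_thetaF. Qed.

Lemma tens_theta_incl (g : G) : tens_theta (tens_incl H g) = fg_theta g.
Proof. by rewrite tens_theta_pi fg_theta1 addbF. Qed.

Lemma tens_proj_pi (p : G * H) : tens_proj (\pi_(tens G H) p) = \pi_(bos H) p.2.
Proof. by rewrite /tens_proj; case: (tens_repr_pi p) => -> //; rewrite bos_piF. Qed.

Lemma tens_incl_mul (x y : G) :
  tens_incl H (fg_mul x y) = tens_mul (tens_incl H x) (tens_incl H y).
Proof. by rewrite tens_mul_pi /tens_mul_pair /= fg_theta1 andbF !fg_mul1l. Qed.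

Lemma tens_proj_mul (x y : tens G H) :
  tens_proj (tens_mul x y) = bos_mul (tens_proj x) (tens_proj y).
Proof.
by rewrite -(reprK x) -(reprK y) tens_mul_pi !tens_proj_pi bos_mul_pi.
Qed.

Lemma tens_incl_inj : fg_F H <> fg_one H -> injective (tens_incl H : G -> tens G H).
Proof.
move=> FH_neq1 x y /tens_eqP /orP[/eqP[] // | /eqP[_ F1]].
by case: FH_neq1; rewrite F1 fg_mul1r.
Qed.

Lemma tens_incl_continuous : continuous (tens_incl H : G -> tens G H).
Proof.
move=> g; apply: (@continuous_comp _ _ _ (fun g : G => (g, fg_one H))).
  by apply: cvg_pair; [exact: cvg_id | exact: cvg_cst].
exact: pi_continuous.
Qed.

Lemma tens_proj_continuous : continuous (@tens_proj G H).
Proof.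
apply/quotient_continuous.
have -> : @tens_proj G H \o \pi_(tens G H) = \pi_(bos H) \o snd.
  by apply: funext => p /=; rewrite tens_proj_pi.
move=> p; apply: continuous_comp; first exact: cvg_snd.
exact: pi_continuous.
Qed.

Lemma tens_proj_incl (g : G) : tens_proj (tens_incl H g) = bos_one H.
Proof. by rewrite tens_proj_pi. Qed.

Lemma tens_proj_eq1 (x : tens G H) :
  tens_proj x = bos_one H -> exists g : G, tens_incl H g = x.
Proof.
rewrite -(reprK x); case: (repr x) => g h; rewrite tens_proj_pi /bos_one /=.
case/bos_eqP/orP=> /eqP ->; first by exists g.
exists (fg_mul (fg_F G) g).
by rewrite -[RHS]tens_piF /pairF /= fg_FFx.
Qed.

Lemma tens_proj_pi_repr (g : G) (c : bos H) :
  tens_proj (\pi_(tens G H) (g, repr c)) = c.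
Proof. by rewrite tens_proj_pi reprK. Qed.

Lemma exact_seq_on_tens (SA : set G) (SB : set (tens G H)) :
  fg_F H <> fg_one H ->
  tens_incl H @` SA `<=` SB ->
  (forall g, SB (tens_incl H g) -> SA g) ->
  (forall c, exists2 x, SB x & tens_proj x = c) ->
  exact_seq_on (@fg_mul G) (@tens_mul G H) (@bos_mul H) (bos_one H)
    SA SB (tens_incl H) (@tens_proj G H).
Proof.
move=> FH_neq1 incl_SA SB_SA proj_onto.
split=> //; split; first exact: continuous_subspaceT tens_incl_continuous.
split; first exact: continuous_subspaceT tens_proj_continuous.
split; first by move=> x y _ _; exact: tens_incl_mul.
split; first by move=> x y _ _; exact: tens_proj_mul.
split; first by move=> x y _ _; exact: tens_incl_inj.
split=> // x SBx; split=> [/tens_proj_eq1[g incl_g] | [g _ <-]].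
  by exists g => //; apply: SB_SA; rewrite incl_g.
exact: tens_proj_incl.
Qed.

End TensorProduct.

Theorem mainTheorem4 (G H : fermionicGroup) :
  @fg_F H <> @fg_one H ->
  exact_seq_on (@fg_mul G) (@tens_mul G H) (@bos_mul H) (@bos_one H)
    setT setT (@tens_incl G H) (@tens_proj G H)
  /\
  ((exists g : G, @fg_theta G g = true) ->
   exact_seq_on (@fg_mul G) (@tens_mul G H) (@bos_mul H) (@bos_one H)
     (@fg_even G) (@tens_even G H) (@tens_incl G H) (@tens_proj G H)).
Proof.
move=> FH_neq1; split.
  apply: exact_seq_on_tens => // c.
  by exists (\pi_(tens G H) (fg_one G, repr c)); last exact: tens_proj_pi_repr.
move=> /fg_theta_onto theta_onto; apply: exact_seq_on_tens => //.
- by move=> _ [g even_g <-]; rewrite /tens_even /= tens_theta_incl.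
- by move=> g; rewrite /tens_even /fg_even /= tens_theta_incl.
- move=> c; have [g theta_g] := theta_onto (fg_theta (repr c)).
  exists (\pi_(tens G H) (g, repr c)); last exact: tens_proj_pi_repr.
  by rewrite /tens_even /= tens_theta_pi theta_g addbb.
Qed.
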